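(* Consider two bits $B_1,B_2$ and two anti-bits $A_1,A_2$ in the state $\Phi_{B_1A_1}\otimes\Phi_{B_2A_2}$, where $\Phi=|\Phi\rangle\langle\Phi|$ and $|\Phi\rangle=(|0\rangle|0\rangle+|1\rangle|1\rangle)/\sqrt2$. For $i,j\in\{0,1\}$ and a bit $B$ and anti-bit $A$ let $|\phi_i^{(j)}\rangle_{BA}=|i\rangle_B|i\oplus j\rangle_A$ ($\oplus$ = addition mod 2). Let $\{|v_0\rangle,|v_1\rangle\}$ and $\{|w_0\rangle,|w_1\rangle\}$ be any two orthonormal bases of $\mathbb C^2$, with $|v_a\rangle=v_{a,0}|0\rangle+v_{a,1}|1\rangle$ and $|w_b\rangle=w_{b,0}|0\rangle+w_{b,1}|1\rangle$. Define, for $a,b,l\in\{0,1\}$, $|V_a^{(l)}\rangle=v_{a,0}|\phi_0^{(l)}\rangle_{B_1A_2}+v_{a,1}|\phi_1^{(l)}\rangle_{B_1A_2}$, $|W_b^{(l)}\rangle=w_{b,0}|\phi_l^{(l)}\rangle_{B_2A_1}+w_{b,1}|\phi_{l\oplus1}^{(l)}\rangle_{B_2A_1}$, $P_a=\sum_{l}|V_a^{(l)}\rangle\langle V_a^{(l)}|$ and $Q_b=\sum_l|W_b^{(l)}\rangle\langle W_b^{(l)}|$. Then $\{P_0,P_1\}$ is a valid measurement on the $(1,1)$-composite $B_1A_2$, $\{Q_0,Q_1\}$ is a valid measurement on the $(1,1)$-composite $B_2A_1$, and for all $a,b\in\{0,1\}$ $$\mathrm{Tr}\big[(P_a\otimes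 Q_b)(\Phi_{B_1A_1}\otimes\Phi_{B_2A_2})\big]=\tfrac12\,\big|v_{a,0}w_{b,0}+v_{a,1}w_{b,1}\big|^2,$$ which equals the probability of outcomes $(a,b)$ when the qubit measurements in bases $\{|v_a\rangle\}$ and $\{|w_b\rangle\}$ are performed on the two-qubit maximally entangled state $(|00\rangle+|11\rangle)/\sqrt2$. Consequently, with Alice holding $B_1A_2$ and Bob holding $B_2A_1$, local valid measurements on this state achieve the CHSH value $2\sqrt2$, violating the CHSH inequality.
   Context: Take $d=2$: bits and anti-bits each have Hilbert space $\mathbb C^2$ with computational basis $\{|0\rangle,|1\rangle\}$. For a bit $B$ and anti-bit $A$, the pure states of the $(1,1)$-composite $BA$ are unit vectors lying in the parity-0 subspace $\mathrm{span}\{|0\rangle|0\rangle,|1\rangle|1\rangle\}$ or in the parity-1 subspace $\mathrm{span}\{|0\rangle|1\rangle,|1\rangle|0\rangle\}$. For two bits and two anti-bits, pure states are unit vectors of the form $(U\otimes W)|\Psi'\rangle$ with $U$ a permutation of the bit factors, $W$ a permutation of the anti-bit factors and $|\Psi'\rangle$ having well-defined parity on each pair $(B_1A_1)$ and $(B_2A_2)$; states are convex combinations of projectors onto pure states. A valid measurement on a composite is a POVM whose elements are nonnegative linear combinations of projectors onto pure states of that composite; outcome probabilities are given by $\mathrm{Tr}[P\rho]$. The CHSH value is $\langle A_0B_0\rangle+\langle A_0B_1\rangle+\langle A_1B_0\rangle-\langle A_1B_1\rangle$ for two-outcome ($\pm1$) measurements $A_0,A_1$ of Alice and $B_0,B_1$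 of Bob; the CHSH inequality states that local hidden variable models give at most $2$. *)

From mathcomp Require Import all_boot all_order all_algebra all_field.
Set Implicit Arguments. Unset Strict Implicit. Unset Printing Implicit Defensive.
Import Order.TTheory GRing.Theory Num.Theory.
Local Open Scope ring_scope.

(* Bits are booleans; computational basis |false> = |0>, |true> = |1>.
   Addition mod 2 is xor, written (+) / addb. *)

Definition vect (T : finType) := T -> algC.
Definition oper (T : finType) := T -> T -> algC.

Definition proj (T : finType) (psi : vect T) : oper T :=
  fun x y => psi x * (psi y)^*.
Definition idop (T : finType) : oper T := fun x y => if x == y then 1 else 0.
Definition trprod (T : finType) (M rho : oper T) : algC :=
  \sum_(x : T) \sum_(y : T) M x y * rho y x.
Definition addop (T : finType) (M N : oper T) : oper T := fun x y => M x y + N x y.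

(* (1,1)-composite of a bit B and an anti-bit A: basis indexed by (b, a). *)
Definition BA := (bool * bool)%type.

(* Pure states of BA: unit vectors of well-defined parity b (+) a. *)
Definition pure11 (psi : vect BA) : Prop :=
  \sum_(x : BA) `|psi x| ^+ 2 = 1 /\
  exists p : bool, forall x : BA, psi x != 0 -> x.1 (+) x.2 = p.

Definition valid_effect11 (P : oper BA) : Prop :=
  exists (n : nat) (c : 'I_n -> algC) (psi : 'I_n -> vect BA),
    (forall i, 0 <= c i) /\ (forall i, pure11 (psi i)) /\
    forall x y, P x y = \sum_(i < n) c i * proj (psi i) x y.

Definition valid_meas11 (P : bool -> oper BA) : Prop :=
  (forall a, valid_effect11 (P a)) /\
  forall x y, P false x y + P true x y = idop x y.

Definition Phi2 : vect (bool * bool)%type :=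
  fun x => if x.1 == x.2 then (sqrtC 2)^-1 else 0.

(* Four systems: index ((b1, a1), (b2, a2)). *)
Definition Sys4 := ((bool * bool) * (bool * bool))%type.

Definition rho4 : oper Sys4 :=
  fun x y => proj Phi2 x.1 y.1 * proj Phi2 x.2 y.2.

(* P acting on (B1,A2) tensored with Q acting on (B2,A1) *)
Definition tens_B1A2_B2A1 (P Q : oper BA) : oper Sys4 :=
  fun x y => P (x.1.1, x.2.2) (y.1.1, y.2.2) * Q (x.2.1, x.1.2) (y.2.1, y.1.2).

Definition phi_ij (i j : bool) : vect BA :=
  fun x => if (x.1 == i) && (x.2 == i (+) j) then 1 else 0.

(* Orthonormal basis of C^2: v a k = v_{a,k}. *)
Definition onb2 (v : bool -> bool -> algC) : Prop :=
  forall a a', \sum_(k : bool) v a k * (v a' k)^* = if a == a' then 1 else 0.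

Definition Vvec (v : bool -> bool -> algC) (a l : bool) : vect BA :=
  fun x => v a false * phi_ij false l x + v a true * phi_ij true l x.
Definition Wvec (w : bool -> bool -> algC) (b l : bool) : vect BA :=
  fun x => w b false * phi_ij l l x + w b true * phi_ij (~~ l) l x.

Definition Pop (v : bool -> bool -> algC) (a : bool) : oper BA :=
  addop (proj (Vvec v a false)) (proj (Vvec v a true)).
Definition Qop (w : bool -> bool -> algC) (b : bool) : oper BA :=
  addop (proj (Wvec w b false)) (proj (Wvec w b true)).

Definition prob4 (v w : bool -> bool -> algC) (a b : bool) : algC :=
  trprod (tens_B1A2_B2A1 (Pop v a) (Qop w b)) rho4.

Definition vec2 (v : bool -> bool -> algC) (a : bool) : vect bool := v a.
Definition prob_qubit (v w : bool -> bool -> algC) (a b : bool) : algC :=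
  trprod (fun x y : bool * bool => proj (vec2 v a) x.1 y.1 * proj (vec2 w b) x.2 y.2)
         (proj Phi2).

(* Correlator <A B> for +-1 valued outcomes (outcome a <-> (-1)^a). *)
Definition correlator (p : bool -> bool -> algC) : algC :=
  \sum_(a : bool) \sum_(b : bool) (if a == b then 1 else -1) * p a b.

Definition CHSH (E00 E01 E10 E11 : algC) : algC := E00 + E01 + E10 - E11.

(* In the computational basis the effect P_a is block diagonal with respect to the
   parity of B1 A2 and acts as the qubit projector |v_a><v_a| on the bit coordinate in
   each block (PopE); Q_b acts likewise as |w_b><w_b| on the anti-bit coordinate (QopE).
   Validity of both measurements follows: every effect is a sum of two pure-state
   projectors, and P_0 + P_1 = 1 because the coefficient matrix of an orthonormal basis
   of C^2 is unitary, so its columns are orthonormal too (onb2_cols).  The state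
   Phi (x) Phi is supported on the four basis states |i i j j>, which turns the outcome
   probability into a finite sum equal to |v_a0 w_b0 + v_a1 w_b1|^2 / 2 (prob4E); the
   qubit probability reduces to the same expression (prob_qubitE).  Finally, for real
   rotated bases the correlator is cos^2 - sin^2 of the angle difference
   (rot_correlator), and Tsirelson's angles 0, pi/4 for Alice and +-pi/8 for Bob give
   the CHSH value 2 sqrt 2 > 2. *)

From mathcomp Require Import all_boot all_order all_algebra all_field.
From mathcomp Require Import ring.
Import Order.TTheory GRing.Theory Num.Theory.
Set Implicit Arguments. Unset Strict Implicit. Unset Printing Implicit Defensive.
Local Open Scope ring_scope.

Definition ord_of_bool (b : bool) : 'I_2 := inord b.
Definition bool_of_ord (i : 'I_2) : bool := i != ord0.

Lemma bool_of_ordK : cancel bool_of_ord ord_of_bool.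
Proof. by case=> -[|[|]] //= ?; apply/val_inj; rewrite /= inordK. Qed.

Lemma ord_of_boolK : cancel ord_of_bool bool_of_ord.
Proof. by case; rewrite /bool_of_ord // -val_eqE /= inordK. Qed.

Lemma sum_ord2 (F : 'I_2 -> algC) :
  \sum_(i < 2) F i = \sum_(b : bool) F (ord_of_bool b).
Proof.
rewrite (reindex ord_of_bool) //.
by exists bool_of_ord => ? _; [exact: ord_of_boolK | exact: bool_of_ordK].
Qed.

Definition mx2 (v : bool -> bool -> algC) : 'M[algC]_2 :=
  \matrix_(i, j) v (bool_of_ord i) (bool_of_ord j).

(* The rows of the coefficient matrix of an orthonormal basis are orthonormal, i.e.
   V V^* = 1; since a one-sided inverse of a square matrix is two-sided, V^* V = 1,
   i.e. its columns are orthonormal as well. *)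
Lemma onb2_cols (v : bool -> bool -> algC) : onb2 v -> forall k k',
  \sum_(a : bool) v a k * (v a k')^* = if k == k' then 1 else 0.
Proof.
move=> hv.
have rows : mx2 v *m (map_mx Num.conj (mx2 v))^T = 1%:M.
  apply/matrixP => i j; rewrite !mxE sum_ord2.
  rewrite -(bool_of_ordK i) -(bool_of_ordK j); move: (bool_of_ord i) (bool_of_ord j) => a a'.
  rewrite (can_eq ord_of_boolK).
  have -> : (a == a')%:R = \sum_(k : bool) v a k * (v a' k)^* by rewrite hv; case: eqP.
  by apply: eq_bigr => k _; rewrite !mxE !ord_of_boolK.
move=> k k'; move/mulmx1C/matrixP/(_ (ord_of_bool k') (ord_of_bool k)): rows.
have -> : (if k == k' then 1 else 0) = (k' == k)%:R :> algC by rewrite eq_sym; case: eqP.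
rewrite !mxE sum_ord2 (can_eq ord_of_boolK) => <-.
by apply: eq_bigr => a _; rewrite !mxE !ord_of_boolK mulrC.
Qed.

Lemma sumBA (F : BA -> algC) :
  \sum_(x : BA) F x = F (true, true) + F (true, false) + (F (false, true) + F (false, false)).
Proof.
transitivity (\sum_(x : BA) F (x.1, x.2)); first by apply: eq_bigr => -[].
by rewrite -(pair_bigA _ (fun a b => F (a, b))) /= !big_bool.
Qed.

Lemma VvecE v a l x : Vvec v a l x = if x.1 (+) x.2 == l then v a x.1 else 0.
Proof.
by case: x => -[] []; case: l; rewrite /Vvec /phi_ij /= !(mulr1, mulr0, addr0, add0r).
Qed.

Lemma WvecE w b l x : Wvec w b l x = if x.1 (+) x.2 == l then w b x.2 else 0.
Proof.
by case: x => -[] []; case: l; rewrite /Wvec /phi_ij /= !(mulr1, mulr0, addr0, add0r).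
Qed.

Lemma PopE v a x y :
  Pop v a x y = if x.1 (+) x.2 == y.1 (+) y.2 then v a x.1 * (v a y.1)^* else 0.
Proof.
rewrite /Pop /addop /proj !VvecE.
by case: (x.1 (+) x.2); case: (y.1 (+) y.2); rewrite /= ?(rmorph0, mulr0, mul0r, addr0, add0r).
Qed.

Lemma QopE w b x y :
  Qop w b x y = if x.1 (+) x.2 == y.1 (+) y.2 then w b x.2 * (w b y.2)^* else 0.
Proof.
rewrite /Qop /addop /proj !WvecE.
by case: (x.1 (+) x.2); case: (y.1 (+) y.2); rewrite /= ?(rmorph0, mulr0, mul0r, addr0, add0r).
Qed.

Lemma effect_of_pure_pair (psi0 psi1 : vect BA) :
  pure11 psi0 -> pure11 psi1 -> valid_effect11 (addop (proj psi0) (proj psi1)).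
Proof.
move=> pure0 pure1.
exists 2%N, (fun _ => 1), (fun i => if val i == 0%N then psi0 else psi1).
split; first by move=> i; exact: ler01.
split; first by move=> i; case: (val i == 0%N).
by move=> x y; rewrite big_ord_recr big_ord1 /= !mul1r.
Qed.

Lemma BA_eq_fst (x y : BA) : (x == y) = (x.1 (+) x.2 == y.1 (+) y.2) && (x.1 == y.1).
Proof. by move: x y => [[] []] [[] []]. Qed.

Lemma BA_eq_snd (x y : BA) : (x == y) = (x.1 (+) x.2 == y.1 (+) y.2) && (x.2 == y.2).
Proof. by move: x y => [[] []] [[] []]. Qed.

(* Completeness of a parity-block measurement: if P_a acts as |u_a><u_a| on a coordinate
   s that labels the states within each parity class, then P_0 + P_1 = 1, because the
   columns of the unitary (u a k) are orthonormal. *)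
Lemma parity_block_complete (P : bool -> oper BA) (u : bool -> bool -> algC) (s : BA -> bool) :
  onb2 u ->
  (forall x y, (x == y) = (x.1 (+) x.2 == y.1 (+) y.2) && (s x == s y)) ->
  (forall a x y, P a x y = if x.1 (+) x.2 == y.1 (+) y.2 then u a (s x) * (u a (s y))^* else 0) ->
  forall x y, P false x y + P true x y = idop x y.
Proof.
move=> hu s_labels PE x y; rewrite !PE /idop s_labels.
case: (_ == _); last by rewrite addr0.
by rewrite -(onb2_cols hu) big_bool addrC.
Qed.

Lemma Vvec_pure v a l : onb2 v -> pure11 (Vvec v a l).
Proof.
move=> hv; split.
  move: (hv a a); rewrite big_bool eqxx sumBA !VvecE !normCK => <-.
  by case: l; rewrite /= ?(rmorph0, mulr0, addr0, add0r) // addrC.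
by exists l => x; rewrite VvecE; case: (x.1 (+) x.2 =P l) => // _; rewrite eqxx.
Qed.

Lemma Wvec_pure w b l : onb2 w -> pure11 (Wvec w b l).
Proof.
move=> hw; split.
  move: (hw b b); rewrite big_bool eqxx sumBA !WvecE !normCK => <-.
  by case: l; rewrite /= ?(rmorph0, mulr0, addr0, add0r) // addrC.
by exists l => x; rewrite WvecE; case: (x.1 (+) x.2 =P l) => // _; rewrite eqxx.
Qed.

Lemma Pop_meas v : onb2 v -> valid_meas11 (Pop v).
Proof.
move=> hv; split; first by move=> a; apply: effect_of_pure_pair; exact: Vvec_pure.
exact: parity_block_complete hv BA_eq_fst (PopE v).
Qed.

Lemma Qop_meas w : onb2 w -> valid_meas11 (Qop w).
Proof.
move=> hw; split; first by move=> b; apply: effect_of_pure_pair; exact: Wvec_pure.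
exact: parity_block_complete hw BA_eq_snd (QopE w).
Qed.

Lemma sum_diag (F : BA -> algC) :
  (forall x, x.1 != x.2 -> F x = 0) -> \sum_x F x = \sum_(i : bool) F (i, i).
Proof.
by move=> F0; rewrite sumBA big_bool (F0 (true, false)) // (F0 (false, true)) // addr0 add0r.
Qed.

(* The basis states of B1 A1 B2 A2 on which Phi (x) Phi is supported. *)
Definition diag4 (x : Sys4) : bool := (x.1.1 == x.1.2) && (x.2.1 == x.2.2).

Lemma sum_diag4 (G : Sys4 -> algC) :
  (forall x, ~~ diag4 x -> G x = 0) ->
  \sum_x G x = \sum_(i : bool) \sum_(j : bool) G ((i, i), (j, j)).
Proof.
move=> G0; transitivity (\sum_(x : Sys4) G (x.1, x.2)); first by apply: eq_bigr => -[].
rewrite -(pair_bigA _ (fun p q => G (p, q))) /=.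
rewrite sum_diag => [|p off]; last by apply: big1 => q _; apply: G0; rewrite /diag4 (negbTE off).
apply: eq_bigr => i _; rewrite sum_diag // => q off.
by apply: G0; rewrite /diag4 /= eqxx (negbTE off).
Qed.

Lemma projPhi p q : proj Phi2 p q = if (p.1 == p.2) && (q.1 == q.2) then 2^-1 else 0.
Proof.
have conj_c : ((sqrtC 2)^-1 : algC)^* = (sqrtC 2)^-1.
  by apply: geC0_conj; rewrite invr_ge0 sqrtC_ge0 ler0n.
rewrite /proj /Phi2; case: (p.1 == p.2); case: (q.1 == q.2);
  by rewrite /= ?rmorph0 ?mulr0 ?mul0r // conj_c -expr2 exprVn sqrtCK.
Qed.

Lemma rho4E y x : rho4 y x = if diag4 y && diag4 x then 4^-1 else 0.
Proof.
rewrite /rho4 /diag4 !projPhi.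
case: (y.1.1 == y.1.2); case: (x.1.1 == x.1.2); case: (y.2.1 == y.2.2);
  case: (x.2.1 == x.2.2); rewrite /= ?mulr0 ?mul0r //.
by rewrite -invfM -natrM.
Qed.

Lemma trprod_Phi (M : oper BA) :
  trprod M (proj Phi2) = 2^-1 * \sum_(i : bool) \sum_(i' : bool) M (i, i) (i', i').
Proof.
rewrite /trprod sum_diag => [|x off]; last first.
  by apply: big1 => y _; rewrite projPhi (negbTE off) andbF mulr0.
rewrite mulr_sumr; apply: eq_bigr => i _; rewrite sum_diag => [|y off]; last first.
  by rewrite projPhi (negbTE off) mulr0.
by rewrite mulr_sumr; apply: eq_bigr => i' _; rewrite projPhi /= !eqxx mulrC.
Qed.

Lemma trprod_rho4 (M : oper Sys4) :
  trprod M rho4 = 4^-1 * \sum_(i : bool) \sum_(j : bool) \sum_(i' : bool) \sum_(j' : bool)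
                           M ((i, i), (j, j)) ((i', i'), (j', j')).
Proof.
rewrite /trprod sum_diag4 => [|x off]; last first.
  by apply: big1 => y _; rewrite rho4E (negbTE off) andbF mulr0.
rewrite mulr_sumr; apply: eq_bigr => i _; rewrite mulr_sumr; apply: eq_bigr => j _.
rewrite sum_diag4 => [|y off]; last by rewrite rho4E (negbTE off) mulr0.
rewrite mulr_sumr; apply: eq_bigr => i' _; rewrite mulr_sumr; apply: eq_bigr => j' _.
by rewrite rho4E /diag4 /= !eqxx mulrC.
Qed.

Lemma prob4E v w a b :
  prob4 v w a b = 2^-1 * `|v a false * w b false + v a true * w b true| ^+ 2.
Proof.
rewrite /prob4 trprod_rho4 /tens_B1A2_B2A1 /=.
under eq_bigr do under eq_bigr do under eq_bigr do under eq_bigr do rewrite PopE QopE.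
by rewrite !big_bool /= normCK rmorphD !rmorphM; field.
Qed.

Lemma prob_qubitE v w a b :
  prob_qubit v w a b = 2^-1 * `|v a false * w b false + v a true * w b true| ^+ 2.
Proof.
rewrite /prob_qubit trprod_Phi /proj /vec2 !big_bool /= normCK rmorphD !rmorphM.
by congr (_ * _); ring.
Qed.

(* The orthonormal basis (c, s), (-s, c) of C^2: for c = cos t, s = sin t it is the
   standard basis rotated by the angle t. *)
Definition rot (c s : algC) (a k : bool) : algC :=
  if a then (if k then c else - s) else (if k then s else c).

Lemma conjCN (x : algC) : (- x)^* = - x^*.
Proof. exact: rmorphN. Qed.

Lemma rot_onb c s : c^* = c -> s^* = s -> c ^+ 2 + s ^+ 2 = 1 -> onb2 (rot c s).
Proof.
move=> cR sR unit [] []; rewrite big_bool /rot /= ?conjCN cR sR;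
  by [ring | rewrite -unit; ring].
Qed.

Lemma prob4_real v w : (forall a k, (v a k)^* = v a k) -> (forall b k, (w b k)^* = w b k) ->
  forall a b, prob4 v w a b = 2^-1 * (v a false * w b false + v a true * w b true) ^+ 2.
Proof. by move=> vR wR a b; rewrite prob4E normCK rmorphD !rmorphM /= !vR !wR expr2. Qed.

Lemma rot_real c s : c^* = c -> s^* = s -> forall a k, (rot c s a k)^* = rot c s a k.
Proof. by move=> cR sR [] []; rewrite /rot ?conjCN ?cR ?sR. Qed.

(* Correlator of two rotated bases: cos^2 - sin^2 of the angle difference, i.e.
   the cosine of twice that difference. *)
Lemma rot_correlator c s c' s' : c^* = c -> s^* = s -> c'^* = c' -> s'^* = s' ->
  correlator (prob4 (rot c s) (rot c' s')) = (c * c' + s * s') ^+ 2 - (s * c' - c * s') ^+ 2.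
Proof.
move=> cR sR c'R s'R.
rewrite /correlator !big_bool /= !(prob4_real (rot_real cR sR) (rot_real c'R s'R)) /rot /=.
by field.
Qed.

Lemma one_lt_sqrt2 : 1 < sqrtC 2 :> algC.
Proof. by rewrite -{1}(sqrtC1 algC) ltr_sqrtC ?qualifE /= ?ler01 ?ler0n // ltr1n. Qed.

Lemma sqrt2_le2 : sqrtC 2 <= 2 :> algC.
Proof.
rewrite -[X in _ <= X](@sqrCK _ 2) ?ler0n // ler_sqrtC ?qualifE /= ?exprn_ge0 ?ler0n //.
by rewrite -natrX ler_nat.
Qed.

(* 1/sqrt 2 = cos (pi/4), and cos (pi/8), sin (pi/8) through their half-angle formulas. *)
Definition inv_sqrt2 : algC := sqrtC 2 / 2.
Definition cos8 : algC := sqrtC ((2 + sqrtC 2) / 4).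
Definition sin8 : algC := sqrtC ((2 - sqrtC 2) / 4).

Lemma cos8_sq_ge0 : 0 <= (2 + sqrtC 2) / 4 :> algC.
Proof. by apply/divr_ge0/ler0n/addr_ge0; rewrite ?sqrtC_ge0 ler0n. Qed.

Lemma sin8_sq_ge0 : 0 <= (2 - sqrtC 2) / 4 :> algC.
Proof. by apply/divr_ge0/ler0n; rewrite subr_ge0 sqrt2_le2. Qed.

Lemma inv_sqrt2_real : inv_sqrt2^* = inv_sqrt2.
Proof. by apply/geC0_conj/divr_ge0; rewrite ?sqrtC_ge0 ler0n. Qed.

Lemma cos8_real : cos8^* = cos8.
Proof. by apply: geC0_conj; rewrite sqrtC_ge0 cos8_sq_ge0. Qed.

Lemma sin8_real : sin8^* = sin8.
Proof. by apply: geC0_conj; rewrite sqrtC_ge0 sin8_sq_ge0. Qed.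

Lemma inv_sqrt2_sq : inv_sqrt2 ^+ 2 = 2^-1.
Proof. by rewrite expr_div_n sqrtCK; field. Qed.

Lemma cos8_sq : cos8 ^+ 2 = (2 + sqrtC 2) / 4.
Proof. exact: sqrtCK. Qed.

Lemma sin8_sq : sin8 ^+ 2 = (2 - sqrtC 2) / 4.
Proof. exact: sqrtCK. Qed.

(* sin (pi/4) = 2 cos (pi/8) sin (pi/8). *)
Lemma cos8_sin8 : cos8 * sin8 = sqrtC 2 / 4.
Proof.
rewrite /cos8 /sin8 -sqrtCM ?qualifE /= ?cos8_sq_ge0 ?sin8_sq_ge0 //.
have -> : (2 + sqrtC 2) / 4 * ((2 - sqrtC 2) / 4) = (sqrtC 2 / 4) ^+ 2 :> algC.
  transitivity ((4 - sqrtC 2 ^+ 2) / 16 : algC); first by field.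
  by rewrite sqrtCK expr_div_n sqrtCK; field.
by rewrite sqrCK //; apply/divr_ge0; rewrite ?sqrtC_ge0 ler0n.
Qed.

(* Tsirelson's strategy: Alice measures along the angles 0 and pi/4, Bob along +-pi/8;
   three correlators equal cos (pi/4) and the fourth equals -cos (pi/4). *)
Lemma tsirelson_value :
  CHSH (correlator (prob4 (rot 1 0) (rot cos8 sin8)))
       (correlator (prob4 (rot 1 0) (rot cos8 (- sin8))))
       (correlator (prob4 (rot inv_sqrt2 inv_sqrt2) (rot cos8 sin8)))
       (correlator (prob4 (rot inv_sqrt2 inv_sqrt2) (rot cos8 (- sin8))))
  = 2 * sqrtC 2.
Proof.
have msin8_real : (- sin8)^* = - sin8 by rewrite conjCN sin8_real.
rewrite /CHSH (rot_correlator (conjC1 _) (conjC0 _) cos8_real sin8_real).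
rewrite (rot_correlator (conjC1 _) (conjC0 _) cos8_real msin8_real).
rewrite (rot_correlator inv_sqrt2_real inv_sqrt2_real cos8_real sin8_real).
rewrite (rot_correlator inv_sqrt2_real inv_sqrt2_real cos8_real msin8_real).
transitivity (2 * (cos8 ^+ 2 - sin8 ^+ 2) + 8 * inv_sqrt2 ^+ 2 * (cos8 * sin8)); first by ring.
by rewrite cos8_sq sin8_sq inv_sqrt2_sq cos8_sin8; field.
Qed.

Theorem mainTheorem3 :
  (forall v w : bool -> bool -> algC, onb2 v -> onb2 w ->
     [/\ valid_meas11 (Pop v),
         valid_meas11 (Qop w),
         (forall a b : bool,
            prob4 v w a b = 2^-1 * `|v a false * w b false + v a true * w b true| ^+ 2) &
         (forall a b : bool, prob4 v w a b = prob_qubit v w a b)]) /\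
  (exists v0 v1 w0 w1 : bool -> bool -> algC,
     [/\ onb2 v0, onb2 v1, onb2 w0, onb2 w1 &
         CHSH (correlator (prob4 v0 w0)) (correlator (prob4 v0 w1))
              (correlator (prob4 v1 w0)) (correlator (prob4 v1 w1))
         = 2 * sqrtC 2]) /\
  2 < 2 * sqrtC 2 :> algC.
Proof.
split.
  move=> v w hv hw; split; [exact: Pop_meas | exact: Qop_meas | exact: prob4E |].
  by move=> a b; rewrite prob4E prob_qubitE.
split.
  exists (rot 1 0), (rot inv_sqrt2 inv_sqrt2), (rot cos8 sin8), (rot cos8 (- sin8)).
  split; last exact: tsirelson_value.
  - by apply: rot_onb; rewrite ?conjC1 ?conjC0 // expr1n expr0n addr0.
  - by apply: rot_onb; rewrite ?inv_sqrt2_real // inv_sqrt2_sq; field.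
  - by apply: rot_onb; rewrite ?cos8_real ?sin8_real // cos8_sq sin8_sq; field.
  - by apply: rot_onb; rewrite ?conjCN ?cos8_real ?sin8_real // sqrrN cos8_sq sin8_sq; field.
by rewrite -{1}(mulr1 2) ltr_pM2l ?one_lt_sqrt2 ?ltr0n.
Qed.
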